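(* Let $\mathcal G$ be a simple connected graph and $\gamma\in\Gamma$. Then the orientations of the edges of $\mathcal G$ can be chosen so that $Vd\ge0$ (componentwise) for all $\varepsilon\ge0$ sufficiently small, where $d=e_1+\varepsilon\gamma$ and $V$ is the PTDF matrix for that orientation.
   Context: $\mathcal G=(\mathcal N,\mathcal E)$ has nodes $\{1,\dots,n\}$ and edges $\{1,\dots,m\}$, each with an orientation. $C\in\mathbb R^{m\times n}$ is the incidence matrix ($C_{e,i}=1$ if $e$ enters $i$, $-1$ if $e$ leaves $i$, $0$ otherwise) and the PTDF matrix is $V=C(C^TC)^+$ ($^+$ = Moore–Penrose pseudoinverse); reversing the orientation of an edge flips the sign of its row of $V$. $e_1$ is the first unit vector and $\Gamma=\{\gamma\in\mathbb R^n:\gamma_1=0,\gamma\ge0,\sum_i\gamma_i=1\}$. *)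

From HB Require Import structures.
From mathcomp Require Import all_boot all_order all_algebra.
From mathcomp Require Import reals.
Set Implicit Arguments. Unset Strict Implicit. Unset Printing Implicit Defensive.
Import Order.TTheory GRing.Theory Num.Theory.
Local Open Scope ring_scope.

(* A graph with nodes 'I_N (node "1" of the paper is ord0) and edges 'I_m,
   edge e joining tl e and hd e (a reference orientation: tl e -> hd e). *)

Definition simple_graph (N m : nat) (tl hd : 'I_m -> 'I_N) : Prop :=
  (forall e, tl e != hd e) /\
  (forall e f, e != f ->
     ~ ((tl e == tl f) && (hd e == hd f) || (tl e == hd f) && (hd e == tl f))).

Definition adj (N m : nat) (tl hd : 'I_m -> 'I_N) : rel 'I_N :=
  fun i j => [exists e, ((tl e == i) && (hd e == j)) || ((tl e == j) && (hd e == i))].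

Definition connected_graph (N m : nat) (tl hd : 'I_m -> 'I_N) : Prop :=
  forall i j, connect (adj tl hd) i j.

Definition ortail (N m : nat) (o : 'I_m -> bool) (tl hd : 'I_m -> 'I_N) e :=
  if o e then hd e else tl e.
Definition orhead (N m : nat) (o : 'I_m -> bool) (tl hd : 'I_m -> 'I_N) e :=
  if o e then tl e else hd e.

Definition incidence (R : nzRingType) (N m : nat) (src dst : 'I_m -> 'I_N)
  : 'M[R]_(m, N) :=
  \matrix_(e, i) (if dst e == i then 1 else if src e == i then -1 else 0).

Definition is_pinv (R : realType) (p q : nat) (A : 'M[R]_(p, q)) (X : 'M[R]_(q, p))
  : Prop :=
  [/\ A *m X *m A = A, X *m A *m X = X,
      (A *m X)^T = A *m X & (X *m A)^T = X *m A].

(* PTDF matrix V = C (C^T C)^+, given the pseudoinverse X of C^T C *)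
Definition ptdf (R : realType) (N m : nat) (C : 'M[R]_(m, N)) (X : 'M[R]_N)
  : 'M[R]_(m, N) := C *m X.

Definition in_Gamma (R : realType) (N : nat) (g : 'cV[R]_N.+1) : Prop :=
  [/\ g ord0 0 = 0, (forall i, 0 <= g i 0) & \sum_i g i 0 = 1].

Definition e1 (R : realType) (N : nat) : 'cV[R]_N.+1 := delta_mx ord0 0.

From HB Require Import structures.
From mathcomp Require Import all_boot all_order all_algebra.
From mathcomp Require Import reals.
From mathcomp Require Import lra.
From Stdlib Require Import Classical.
Import Order.TTheory GRing.Theory Num.Theory.
Local Open Scope ring_scope.

(* Reversing edge e multiplies row e of C by -1 and leaves C^T C unchanged, so
   the pseudoinverse X of C^T C does not depend on the orientation and row e
   of V d = C X d, an affine function a_e + eps b_e of eps, only changes sign.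
   Orienting each edge so that (a_e, b_e) is lexicographically nonnegative
   makes every a_e + eps b_e nonnegative for all small eps >= 0. *)

Section SmallPerturbation.
Context {R : realFieldType}.

Definition lexi_neg (a b : R) : bool := (a < 0) || ((a == 0) && (b < 0)).

Lemma lexi_neg_sign (a b : R) (s := (-1) ^+ lexi_neg a b : R) :
  0 <= s * a /\ (s * a = 0 -> 0 <= s * b).
Proof.
rewrite /s /lexi_neg; case: ltrgtP => [a_lt0|a_gt0|->] /=.
- by rewrite !mulN1r; split=> [|/eqP]; [lra | rewrite oppr_eq0 => /eqP; lra].
- by rewrite !mul1r; split=> [|a_eq0]; lra.
- by case: ltrP => b0; rewrite /= ?mulN1r ?mul1r; split=> //; lra.
Qed.

Lemma affine_ge0_small (a b eps : R) :
  0 <= a -> (a = 0 -> 0 <= b) -> 0 <= eps -> (0 < a -> eps * `|b| <= a) ->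
  0 <= a + eps * b.
Proof.
move=> a_ge0 ab_ge0 eps_ge0 small; have [a_eq0|a_neq0] := eqVneq a 0.
  by rewrite a_eq0 add0r mulr_ge0 // ab_ge0.
have /small : 0 < a by rewrite lt_def a_neq0.
have : - `|b| <= b by rewrite lerNl ler_normr lexx orbT.
move=> /(ler_wpM2l eps_ge0); rewrite mulrN; lra.
Qed.

(* The choice eps0 = 1 / (1 + sum_i |b_i| / a_i) uses that |b_i| / 0 = 0. *)
Lemma uniform_small_eps {I : finType} (a b : I -> R) :
  (forall i, 0 <= a i) -> (forall i, a i = 0 -> 0 <= b i) ->
  exists2 eps0 : R, 0 < eps0 &
    forall eps, 0 <= eps -> eps <= eps0 -> forall i, 0 <= a i + eps * b i.
Proof.
move=> a_ge0 ab_ge0; pose S := \sum_i `|b i| / a i.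
have S_ge0 : 0 <= S by apply: sumr_ge0 => i _; rewrite divr_ge0.
have S_gt0 : 0 < 1 + S by lra.
exists (1 + S)^-1 => [|eps eps_ge0 eps_le i]; first by rewrite invr_gt0.
apply: affine_ge0_small => //; first exact: ab_ge0.
move=> a_gt0.
have term_le : `|b i| / a i <= 1 + S.
  have rest_ge0 : 0 <= \sum_(j | j != i) `|b j| / a j.
    by apply: sumr_ge0 => j _; rewrite divr_ge0.
  rewrite /S (bigD1 i) //=; lra.
rewrite ler_pdivrMr // in term_le.
apply: le_trans (ler_wpM2r (normr_ge0 _) eps_le) _.
by rewrite mulrC ler_pdivrMr // mulrC.
Qed.

End SmallPerturbation.

Lemma is_pinv_uniq (R : realType) p q (A : 'M[R]_(p, q)) X Y :
  is_pinv A X -> is_pinv A Y -> X = Y.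
Proof.
case=> [AXA XAX AXsym XAsym] [AYA YAY AYsym YAsym].
have -> : X = X *m A *m Y.
  transitivity (X *m (A *m X)^T); first by rewrite AXsym mulmxA XAX.
  transitivity (X *m (X^T *m (A *m Y *m A)^T)); first by rewrite AYA trmx_mul.
  transitivity (X *m ((A *m X)^T *m (A *m Y)^T)).
    by rewrite [(A *m Y *m A)^T]trmx_mul !trmx_mul !mulmxA.
  by rewrite AXsym AYsym !mulmxA XAX.
symmetry; transitivity ((Y *m A)^T *m Y); first by rewrite YAsym YAY.
transitivity ((Y *m (A *m X *m A))^T *m Y); first by rewrite AXA.
transitivity ((X *m A)^T *m (Y *m A)^T *m Y).
  by rewrite !mulmxA -[Y *m A *m X *m A]mulmxA trmx_mul.
by rewrite XAsym YAsym -(mulmxA (X *m A)) YAY.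
Qed.

Section Reorientation.
Context {R : nzRingType} {n m : nat} {tl hd : 'I_m -> 'I_n} {o : 'I_m -> bool}.
Hypothesis loopless : forall e, tl e != hd e.

Let C := @incidence R _ _ tl hd.
Let C' := @incidence R _ _ (ortail o tl hd) (orhead o tl hd).

Lemma incidence_reorient e i : C' e i = (-1) ^+ o e * C e i.
Proof.
rewrite /C /C' /ortail /orhead !mxE; case: (o e); last by rewrite mul1r.
have hd_neq_tl : hd e != tl e by rewrite eq_sym loopless.
rewrite mulN1r; case: (tl e =P i) => [<-|_]; first by rewrite (negbTE hd_neq_tl) opprK.
by case: (hd e == i); rewrite ?oppr0.
Qed.

Lemma mulmx_incidence_reorient k (Y : 'M[R]_(n, k)) e j :
  (C' *m Y) e j = (-1) ^+ o e * (C *m Y) e j.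
Proof.
rewrite [(C' *m Y) e j]mxE [(C *m Y) e j]mxE mulr_sumr; apply: eq_bigr => i _.
by rewrite incidence_reorient mulrA.
Qed.

Lemma gram_incidence_reorient : C'^T *m C' = C^T *m C.
Proof.
apply/matrixP => i j; rewrite [LHS]mxE [RHS]mxE; apply: eq_bigr => e _.
rewrite ![_^T _ _]mxE !incidence_reorient.
by case: (o e); rewrite ?mul1r // !mulN1r mulrNN.
Qed.

End Reorientation.

Theorem mainTheorem2 (R : realType) (n m : nat) (tl hd : 'I_m -> 'I_n.+1)
  (Hsimple : simple_graph tl hd) (Hconn : connected_graph tl hd)
  (gamma : 'cV[R]_n.+1) (Hgamma : in_Gamma gamma) :
  exists o : 'I_m -> bool,
    let C : 'M[R]_(m, n.+1) := @incidence R _ _ (ortail o tl hd) (orhead o tl hd) in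
    forall X : 'M[R]_n.+1, is_pinv (C^T *m C) X ->
      exists2 eps0 : R, 0 < eps0 &
        forall eps : R, 0 <= eps -> eps <= eps0 ->
          forall e : 'I_m, 0 <= (ptdf C X *m (@e1 R n + eps *: gamma)) e 0.
Proof.
have loopless : forall e, tl e != hd e by case: Hsimple.
pose C0 := @incidence R _ _ tl hd.
(* Every real matrix has a pseudoinverse; without one the claim is vacuous. *)
have [[X0 pinvX0]|no_pinv] := classic (exists X0, is_pinv (C0^T *m C0) X0);
  last first.
  exists (fun=> false) => C X pinvX; exfalso; apply: no_pinv; exists X.
  by rewrite /C (gram_incidence_reorient loopless) in pinvX.
pose a e := (C0 *m (X0 *m @e1 R n)) e 0.
pose b e := (C0 *m (X0 *m gamma)) e 0.
pose o e := lexi_neg (a e) (b e).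
exists o => C X pinvX.
have <- : X0 = X.
  apply: is_pinv_uniq pinvX0 _.
  by rewrite /C (gram_incidence_reorient loopless) in pinvX.
have [eps0 eps0_gt0 small] := uniform_small_eps _ _
  (fun e => (lexi_neg_sign (a e) (b e)).1)
  (fun e => (lexi_neg_sign (a e) (b e)).2).
exists eps0 => // eps eps_ge0 eps_le e.
rewrite /ptdf -mulmxA !(mulmxDr, =^~ scalemxAr) [X in 0 <= X]mxE [X in _ + X]mxE.
rewrite !(mulmx_incidence_reorient loopless).
exact: small.
Qed.
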